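(* Let $G$ be a finite group and let $(\Phi,\Psi)$ be a complementary pair of Young functions both satisfying the $\Delta_2$-condition. Then the Banach algebra $A_\Phi(G)^{**}$, equipped with the first Arens product, is semi-simple.
   Context: A Young function is an even, convex, continuous, real-valued function $\Phi:\mathbb{R}\to[0,\infty)$ with $\Phi(0)=0$ and $\lim_{x\to\infty}\Phi(x)=\infty$; its complementary function is $\Psi(y)=\sup\{x|y|-\Phi(x):x\ge0\}$. $\Phi$ satisfies the $\Delta_2$-condition if there is $k>0$ with $\Phi(2x)\le k\Phi(x)$ for all $x\ge0$. $A_\Phi(G)$ is the space of functions $u=\sum_n f_n*\check{g_n}$ ($f_n\in L^\Phi(G)$ with Luxemburg norm $N_\Phi$, $g_n\in L^\Psi(G)$ with Orlicz norm $\|\cdot\|_\Psi$, $\check g(x)=g(x^{-1})$, $\sum_n N_\Phi(f_n)\|g_n\|_\Psi<\infty$) with the infimum norm; a commutative Banach algebra under pointwise operations. First Arens product on $A_\Phi(G)^{**}$: $\langle u\cdot T,v\rangle=\langle T,uv\rangle$, $\langle\Gamma\odot T,u\rangle=\langle\Gamma,u\cdot T\rangle$, $\langle\tilde\Gamma\,\square\,\Gamma,T\rangle=\langle\tilde\Gamma,\Gamma\odot T\rangle$ for $u,v\in A_\Phi(G)$, $T\in A_\Phi(G)^*$, $\Gamma,\tilde\Gamma\in A_\Phi(G)^{**}$. Semi-simple means the Jacobson radical is $\{0\}$. *)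

From HB Require Import structures.
From mathcomp Require Import all_boot all_order all_algebra all_fingroup.
From mathcomp Require Import all_classical all_reals all_analysis.
From mathcomp Require Import complex.
Set Implicit Arguments. Unset Strict Implicit. Unset Printing Implicit Defensive.
Import Order.TTheory GRing.Theory Num.Theory.
Import numFieldNormedType.Exports.
Local Open Scope ring_scope.
Local Open Scope classical_set_scope.

Section Radical.
Variables (K : pzRingType) (X : Type) (P : X -> Prop)
  (add : X -> X -> X) (scale : K -> X -> X) (mul : X -> X -> X) (zero : X).

Record left_ideal (I : X -> Prop) : Prop := {
  li_sub : forall x, I x -> P x;
  li_0 : I zero;
  li_add : forall x y, I x -> I y -> I (add x y);
  li_scale : forall c x, I x -> I (scale c x);
  li_mul : forall a x, P a -> I x -> I (mul a x) }.

Definition modular_left (I : X -> Prop) : Prop :=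
  exists e, P e /\ forall a, P a -> I (add a (scale (-1) (mul a e))).

Definition proper_set (I : X -> Prop) : Prop := exists a, P a /\ ~ I a.

Definition maximal_modular_left_ideal (I : X -> Prop) : Prop :=
  [/\ left_ideal I, modular_left I, proper_set I &
      forall J, left_ideal J -> proper_set J -> (forall x, I x -> J x) ->
        forall x, J x -> I x].

Definition jacobson_radical (x : X) : Prop :=
  P x /\ forall I, maximal_modular_left_ideal I -> I x.

Definition semisimple : Prop := forall x, jacobson_radical x -> x = zero.
End Radical.

Section Young.
Variable R : realType.

Record young_function (Phi : R -> R) : Prop := {
  young_even : forall x : R, Phi (- x) = Phi x;
  young_convex : forall x y t : R, 0 <= t <= 1 ->
      Phi (t * x + (1 - t) * y) <= t * Phi x + (1 - t) * Phi y;
  young_cont : continuous Phi;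
  young_ge0 : forall x : R, 0 <= Phi x;
  young_0 : Phi 0 = 0;
  young_infty : Phi x @[x --> +oo%R] --> +oo%R }.

Definition complementary (Phi Psi : R -> R) : Prop :=
  forall y,
    (forall x, 0 <= x -> x * `|y| - Phi x <= Psi y) /\
    (forall z, (forall x, 0 <= x -> x * `|y| - Phi x <= z) -> Psi y <= z).

Definition delta2 (Phi : R -> R) : Prop :=
  exists k, 0 < k /\ forall x, 0 <= x -> Phi (2 * x) <= k * Phi x.
End Young.

(* The Orlicz Fourier-type algebra A_Phi(G) of a finite group G        *)
(* (Haar measure = counting measure) and its bidual with the first     *)
(* Arens product.                                                      *)
Section APhi.
Variables (R : realType) (gT : finGroupType) (Phi Psi : R -> R).
Local Notation C := R[i].
Local Notation F := (gT -> C).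

Definition cabs (z : C) : R := ComplexField.Normc.normc z.

Definition luxemburg (f : F) : R :=
  inf [set k : R | 0 < k /\ \sum_(x : gT) Phi (cabs (f x) / k) <= 1].

Definition orlicz (g : F) : R :=
  sup [set s : R | exists v : F,
         \sum_(x : gT) Phi (cabs (v x)) <= 1 /\
         s = \sum_(x : gT) cabs (v x * g x)].

Definition check (g : F) : F := fun x => g (x^-1)%g.

Definition conv (f h : F) : F := fun x => \sum_(y : gT) f y * h (y^-1 * x)%g.

Definition cvgC (s : nat -> C) (l : C) : Prop :=
  forall eps : R, 0 < eps -> exists N0, forall N, (N0 <= N)%N ->
    cabs (s N - l) < eps.

Definition AP_rep (u : F) (s : R) : Prop :=
  exists (f g : nat -> F),
    series (fun n => luxemburg (f n) * orlicz (g n)) @ \oo --> s /\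
    forall x, cvgC (fun N => \sum_(n < N) conv (f n) (check (g n)) x) (u x).

Definition inAP (u : F) : Prop := exists s, AP_rep u s.

Definition normAP (u : F) : R := inf [set s | AP_rep u s].

Definition isDual (T : F -> C) : Prop :=
  [/\ forall u v, inAP u -> inAP v -> T (fun x => u x + v x) = T u + T v,
      forall (c : C) u, inAP u -> T (fun x => c * u x) = c * T u,
      exists M : R, forall u, inAP u -> cabs (T u) <= M * normAP u &
      forall u, ~ inAP u -> T u = 0].

Definition normDual (T : F -> C) : R :=
  sup [set cabs (T u) | u in [set u | inAP u /\ normAP u <= 1]].

Definition isBidual (Ga : (F -> C) -> C) : Prop :=
  [/\ forall T T', isDual T -> isDual T' ->
        Ga (fun u => T u + T' u) = Ga T + Ga T',
      forall (c : C) T, isDual T -> Ga (fun u => c * T u) = c * Ga T,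
      exists M : R, forall T, isDual T -> cabs (Ga T) <= M * normDual T &
      forall T, ~ isDual T -> Ga T = 0].

Definition dot (u : F) (T : F -> C) : F -> C :=
  fun v => if `[< inAP v >] then T (fun x => u x * v x) else 0.

Definition odot (Ga : (F -> C) -> C) (T : F -> C) : F -> C :=
  fun u => if `[< inAP u >] then Ga (dot u T) else 0.

Definition arens (Gt Ga : (F -> C) -> C) : (F -> C) -> C :=
  fun T => if `[< isDual T >] then Gt (odot Ga T) else 0.

Definition biadd (G1 G2 : (F -> C) -> C) : (F -> C) -> C :=
  fun T => G1 T + G2 T.
Definition biscale (c : C) (G1 : (F -> C) -> C) : (F -> C) -> C :=
  fun T => c * G1 T.
Definition bizero : (F -> C) -> C := fun _ => 0.

Definition bidual_arens_semisimple : Prop :=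
  semisimple isBidual biadd biscale arens bizero.
End APhi.

(* For a finite group, A_Phi(G) is the whole space C^G, since u = u * check(delta_1), and its
   norm is equivalent to the l^1 norm: the Luxemburg and Orlicz norms are comparable with the
   sup norm as soon as Phi a <= 1 < Phi x for some a > 0 and all large x.  Hence every linear
   functional on C^G is bounded, A_Phi(G)^* is spanned by the point evaluations ev_g, and
   A_Phi(G)^** consists of all linear functionals on it.  On these the first Arens product is
   pointwise, (X [] Y)(ev_g) = Y(ev_g) X(ev_g), so each {X | X(ev_g) = 0} is a maximal modular
   left ideal (with modular unit the image of the constant function 1), and an element lying in
   all of them vanishes on every ev_g, hence is 0. *)

From Pilot Require Import Defs.
From mathcomp Require Import all_boot all_order all_algebra all_fingroup.
From mathcomp Require Import all_classical all_reals all_analysis.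
From mathcomp Require Import complex.
From mathcomp Require Import ring.
Set Implicit Arguments. Unset Strict Implicit. Unset Printing Implicit Defensive.
Import Order.TTheory GRing.Theory Num.Theory.
Import numFieldNormedType.Exports.
Local Open Scope ring_scope.
Local Open Scope classical_set_scope.

Section YoungFunction.
Variables (R : realType) (Phi : R -> R).
Hypothesis yPhi : young_function Phi.

Lemma young_le_chord (x y : R) : 0 <= x <= y -> 0 < y -> Phi x <= x / y * Phi y.
Proof.
move=> /andP[x_ge0 le_xy] y_gt0.
have t01 : 0 <= x / y <= 1.
  by rewrite divr_ge0 ?(ltW y_gt0) //= ler_pdivrMr // mul1r.
have := young_convex yPhi y 0 t01.
by rewrite mulr0 addr0 young_0 // mulr0 addr0 divfK ?gt_eqF.
Qed.

Lemma young_exists_le1 : exists2 a, 0 < a & Phi a <= 1.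
Proof.
have Phi1_ge0 := young_ge0 yPhi 1.
have c_gt0 : 0 < Phi 1 + 1 by rewrite ltr_wpDl.
exists (Phi 1 + 1)^-1; first by rewrite invr_gt0.
have c_le1 : (Phi 1 + 1)^-1 <= 1 by rewrite invf_le1 // lerDr.
apply: le_trans (young_le_chord _ ltr01) _; first by rewrite c_le1 invr_ge0 ltW.
by rewrite divr1 mulrC -ler_pdivlMr ?invr_gt0 // div1r invrK lerDl.
Qed.

Lemma young_exists_gt1 : exists2 b, 0 < b & forall x, b <= x -> 1 < Phi x.
Proof.
have [M [_ PhiM]] := proj1 (cvgryPgt _) (young_infty yPhi) 1.
have lt_Mb : M < Num.max 1 (M + 1) by rewrite lt_max ltrDl ltr01 orbT.
exists (Num.max 1 (M + 1)) => [|x le_bx]; first by rewrite lt_max ltr01.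
exact/PhiM/(lt_le_trans lt_Mb).
Qed.
End YoungFunction.

(* [cabs] is definitionally the norm of the normed Z-module [Rcomplex R]. *)
Section ComplexModulus.
Variable R : realType.
Implicit Types z w : R[i].

Lemma cabs_ge0 z : 0 <= cabs z.
Proof. exact: (@normr_ge0 R (Rcomplex R)). Qed.

Lemma cabs0 : cabs (0 : R[i]) = 0.
Proof. exact: (@normr0 R (Rcomplex R)). Qed.

Lemma cabs1 : cabs (1 : R[i]) = 1.
Proof. exact: ComplexField.Normc.normc1. Qed.

Lemma cabsM z w : cabs (z * w) = cabs z * cabs w.
Proof. exact: ComplexField.Normc.normcM. Qed.

Lemma cabs_sum (I : Type) (r : seq I) (F : I -> R[i]) :
  cabs (\sum_(i <- r) F i) <= \sum_(i <- r) cabs (F i).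
Proof. exact: (@ler_norm_sum R (Rcomplex R)). Qed.

Lemma cabs_real (x : R) : 0 <= x -> cabs x%:C%C = x.
Proof. by move=> x_ge0; rewrite /cabs /= expr0n /= addr0 sqrtr_sqr ger0_norm. Qed.

Lemma cabs_le_cvgC (s : nat -> R[i]) (l : R[i]) (M : R) :
  cvgC s l -> (forall N, cabs (s N) <= M) -> cabs l <= M.
Proof.
move=> sl sM; apply/ler_addgt0Pr => e e_gt0.
have [N0 /(_ N0 (leqnn _)) lt_sN] := sl e e_gt0.
have -> : l = s N0 - (s N0 - l) by rewrite subKr.
apply: le_trans (@ler_normB R (Rcomplex R) _ _) _.
exact: lerD (sM N0) (ltW lt_sN).
Qed.
End ComplexModulus.

Lemma series_le_cvg (R : realType) (u : nat -> R) (s : R) :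
  (forall n, 0 <= u n) -> series u @ \oo --> s -> forall N, series u N <= s.
Proof.
move=> u_ge0 u_cvg N.
have u_nd : nondecreasing_seq (series u).
  by apply: (@nondecreasing_series _ _ xpredT 0%N) => n _ _.
by have := nondecreasing_cvgn_le u_nd (cvgP _ u_cvg) N; rewrite (cvg_lim _ u_cvg).
Qed.

Section PointMass.
Variables (R : realType) (gT : finGroupType).

Definition delta (g : gT) : gT -> R[i] := fun x => if x == g then 1 else 0.

Lemma conv_check_delta1 (u : gT -> R[i]) : Defs.conv u (Defs.check (delta 1)) = u.
Proof.
apply: funext => x; rewrite /Defs.conv /Defs.check /delta (bigD1 x) //=.
rewrite mulVg invg1 eqxx mulr1 big1 ?addr0 // => y y_neq_x.
by rewrite invg_eq1 -eq_mulVg1 (negbTE y_neq_x) mulr0.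
Qed.
End PointMass.
Arguments delta {R gT}.

Section FiniteOrliczNorms.
Variables (R : realType) (gT : finGroupType) (Phi : R -> R).
Hypothesis yPhi : young_function Phi.
Variables (a b : R).
Hypotheses (a_gt0 : 0 < a) (Phi_a_le1 : Phi a <= 1).
Hypotheses (b_gt0 : 0 < b) (Phi_gt1 : forall x, b <= x -> 1 < Phi x).
Local Notation F := (gT -> R[i]).

Lemma lt_of_sum_Phi_le1 (v : gT -> R) (y : gT) : \sum_x Phi (v x) <= 1 -> v y < b.
Proof.
move=> sum_le1; rewrite ltNge; apply: contraTN sum_le1 => /Phi_gt1 lt1.
rewrite -ltNge; apply: lt_le_trans lt1 _.
by rewrite (bigD1 y) //= lerDl sumr_ge0 // => x _; exact: young_ge0.
Qed.

Lemma luxemburg_admissible (f : F) (e : R) : 0 < e ->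
  \sum_x Phi (cabs (f x) / ((\sum_y cabs (f y) + e) / a)) <= 1.
Proof.
move=> e_gt0; set S := \sum_y cabs (f y).
have S_ge0 : 0 <= S by rewrite sumr_ge0 // => y _; exact: cabs_ge0.
have Se_gt0 : 0 < S + e by rewrite ltr_wpDl.
apply: (@le_trans _ _ (\sum_x cabs (f x) / (S + e))); last first.
  by rewrite -mulr_suml ler_pdivrMr // mul1r lerDl ltW.
apply: ler_sum => x _; rewrite invf_div mulrCA.
set t := cabs (f x) / (S + e).
have fx_le_S : cabs (f x) <= S.
  by rewrite /S (bigD1 x) //= lerDl sumr_ge0 // => y _; exact: cabs_ge0.
have t_ge0 : 0 <= t by rewrite divr_ge0 ?cabs_ge0 ?ltW.
have t_le1 : t <= 1 by rewrite ler_pdivrMr // mul1r (le_trans fx_le_S) ?lerDl ?ltW.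
have at_le_a : 0 <= a * t <= a.
  by rewrite mulr_ge0 ?(ltW a_gt0) //= ler_piMr ?(ltW a_gt0).
apply: le_trans (young_le_chord yPhi at_le_a a_gt0) _.
by rewrite [a * t]mulrC mulfK ?gt_eqF // ler_piMr.
Qed.

Lemma luxemburg_le (f : F) (k : R) :
  0 < k -> \sum_x Phi (cabs (f x) / k) <= 1 -> luxemburg Phi f <= k.
Proof. by move=> k_gt0 sum_le1; apply: ge_inf => //; exists 0 => ? [/ltW]. Qed.

Lemma luxemburg_le_sum (f : F) : luxemburg Phi f <= (\sum_x cabs (f x)) / a.
Proof.
have S_ge0 : 0 <= \sum_x cabs (f x) by rewrite sumr_ge0 // => y _; exact: cabs_ge0.
apply/ler_addgt0Pr => e e_gt0.
have -> : (\sum_x cabs (f x)) / a + e = (\sum_x cabs (f x) + e * a) / a.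
  by rewrite mulrDl mulfK ?gt_eqF.
apply: luxemburg_le; last exact/luxemburg_admissible/mulr_gt0.
by rewrite divr_gt0 // ltr_wpDl // mulr_gt0.
Qed.

Lemma luxemburg0 : luxemburg Phi (fun _ : gT => 0 : R[i]) = 0.
Proof.
apply/eqP; rewrite eq_le; apply/andP; split.
  by apply: le_trans (luxemburg_le_sum _) _; rewrite big1 ?mul0r // => x _; exact: cabs0.
apply: lb_le_inf; last by move=> ? [/ltW].
exists a; split => //; rewrite big1 ?(le_trans _ Phi_a_le1) ?young_ge0 // => x _.
by rewrite cabs0 mul0r young_0.
Qed.

Lemma cabs_le_luxemburg (f : F) (y : gT) : cabs (f y) <= b * luxemburg Phi f.
Proof.
rewrite mulrC -ler_pdivrMr //; apply: lb_le_inf => [|k [k_gt0 sum_le1]].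
  exists ((\sum_x cabs (f x) + 1) / a).
  split; last exact: luxemburg_admissible.
  by rewrite divr_gt0 // ltr_wpDl // sumr_ge0 // => x _; exact: cabs_ge0.
rewrite ler_pdivrMr // mulrC -ler_pdivrMr //; apply: ltW.
exact: lt_of_sum_Phi_le1 sum_le1.
Qed.

Lemma luxemburg_ge0 (f : F) : 0 <= luxemburg Phi f.
Proof. by rewrite -(pmulr_rge0 _ b_gt0) (le_trans (cabs_ge0 (f 1%g))) ?cabs_le_luxemburg. Qed.

Lemma orlicz_has_ubound (g : F) :
  has_ubound [set s : R | exists v : F, \sum_x Phi (cabs (v x)) <= 1 /\
                                        s = \sum_x cabs (v x * g x)].
Proof.
exists (\sum_x b * cabs (g x)) => _ [v [sum_le1 ->]].
apply: ler_sum => x _; rewrite cabsM ler_wpM2r ?cabs_ge0 // ltW //.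
exact: lt_of_sum_Phi_le1 sum_le1.
Qed.

Lemma cabs_le_orlicz (g : F) (z : gT) : a * cabs (g z) <= orlicz Phi g.
Proof.
apply: (ub_le_sup (orlicz_has_ubound g)).
pose v x : R[i] := if x == z then a%:C%C else 0.
have cabs_av x : cabs (v x) = if x == z then a else 0.
  by rewrite /v; case: eqP; rewrite ?cabs0 ?cabs_real ?(ltW a_gt0).
exists v; split.
- rewrite (bigD1 z) //= cabs_av eqxx big1 ?addr0 // => x /negbTE x_neq_z.
  by rewrite cabs_av x_neq_z young_0.
- rewrite (bigD1 z) //= cabsM cabs_av eqxx big1 ?addr0 // => x /negbTE x_neq_z.
  by rewrite cabsM cabs_av x_neq_z mul0r.
Qed.

Lemma orlicz_ge0 (g : F) : 0 <= orlicz Phi g.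
Proof.
by apply: le_trans _ (cabs_le_orlicz g 1%g); rewrite mulr_ge0 ?cabs_ge0 ?(ltW a_gt0).
Qed.

Lemma cabs_conv_le (f h : F) (x : gT) :
  cabs (Defs.conv f (Defs.check h) x) <=
  #|gT|%:R * (b / a) * (luxemburg Phi f * orlicz Phi h).
Proof.
rewrite /Defs.conv; apply: le_trans (cabs_sum _ _) _.
have -> : #|gT|%:R * (b / a) * (luxemburg Phi f * orlicz Phi h) =
          \sum_(y : gT) b * luxemburg Phi f * (orlicz Phi h / a).
  by rewrite sumr_const -mulr_natl; ring.
apply: ler_sum => y _; rewrite cabsM ler_pM ?cabs_ge0 ?cabs_le_luxemburg //.
by rewrite ler_pdivlMr // mulrC /Defs.check cabs_le_orlicz.
Qed.

Lemma AP_partial_sum_le (f h : nat -> F) (s : R) :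
  series (fun n => luxemburg Phi (f n) * orlicz Phi (h n)) @ \oo --> s ->
  forall N, \sum_(n < N) luxemburg Phi (f n) * orlicz Phi (h n) <= s.
Proof.
move=> sum_cvg N; have terms_ge0 n : 0 <= luxemburg Phi (f n) * orlicz Phi (h n).
  by rewrite mulr_ge0 ?luxemburg_ge0 ?orlicz_ge0.
by have := series_le_cvg terms_ge0 sum_cvg N; rewrite /series /= big_mkord.
Qed.

Lemma AP_rep_ge0 (u : F) (s : R) : AP_rep Phi u s -> 0 <= s.
Proof.
by move=> [f [h [sum_cvg _]]]; have := AP_partial_sum_le sum_cvg 0; rewrite big_ord0.
Qed.

Lemma cabs_le_AP_rep (u : F) (s : R) (x : gT) :
  AP_rep Phi u s -> cabs (u x) <= #|gT|%:R * (b / a) * s.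
Proof.
move=> [f [h [sum_cvg u_cvg]]]; apply: cabs_le_cvgC (u_cvg x) _ => N.
apply: le_trans (cabs_sum _ _) _.
apply: (@le_trans _ _
  (\sum_(n < N) #|gT|%:R * (b / a) * (luxemburg Phi (f n) * orlicz Phi (h n)))).
  by apply: ler_sum => n _; exact: cabs_conv_le.
have c_ge0 : 0 <= #|gT|%:R * (b / a).
  exact: mulr_ge0 (ler0n _ _) (divr_ge0 (ltW b_gt0) (ltW a_gt0)).
by rewrite -mulr_sumr ler_wpM2l ?AP_partial_sum_le.
Qed.

Lemma normAP_le (u : F) (s : R) : AP_rep Phi u s -> normAP Phi u <= s.
Proof. by move=> us; apply: ge_inf => //; exists 0 => ? /AP_rep_ge0. Qed.

Lemma AP_rep_conv (f h : F) :
  AP_rep Phi (Defs.conv f (Defs.check h)) (luxemburg Phi f * orlicz Phi h).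
Proof.
exists (fun n => if n is 0%N then f else fun _ => 0), (fun _ => h); split.
  apply: cvg_near_cst; exists 1%N => // -[|N] //= _.
  by rewrite /series /= big_nat_recl //= big1 ?addr0 // => n _; rewrite luxemburg0 mul0r.
move=> x e e_gt0; exists 1%N => -[|N] // _.
rewrite big_ord_recl /= big1 ?addr0 ?subrr ?cabs0 // => n _.
by rewrite /Defs.conv big1 // => y _; rewrite mul0r.
Qed.

Lemma inAP_all (u : F) : inAP Phi u.
Proof. by rewrite -(conv_check_delta1 u); eexists; exact: AP_rep_conv. Qed.

Lemma normAP_ge0 (u : F) : 0 <= normAP Phi u.
Proof.
have [s us] := inAP_all u.
by apply: lb_le_inf => [|t /AP_rep_ge0 //]; exists s.
Qed.

Lemma cabs_le_normAP (u : F) (x : gT) :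
  cabs (u x) <= #|gT|%:R * (b / a) * normAP Phi u.
Proof.
have gT_nonempty : (0 < #|gT|)%N by apply/card_gt0P; exists 1%g.
have c_gt0 : 0 < #|gT|%:R * (b / a) by rewrite mulr_gt0 ?ltr0n ?divr_gt0.
have [s us] := inAP_all u.
rewrite mulrC -ler_pdivrMr //; apply: lb_le_inf => [|t ut]; first by exists s.
by rewrite ler_pdivrMr // mulrC; exact: cabs_le_AP_rep.
Qed.

Lemma normAP_le_sum (u : F) :
  normAP Phi u <= orlicz Phi (delta (1%g : gT)) / a * \sum_x cabs (u x).
Proof.
have := normAP_le (AP_rep_conv u (delta 1)); rewrite conv_check_delta1 => /le_trans; apply.
by rewrite mulrC mulrAC -mulrA ler_wpM2l ?orlicz_ge0 ?luxemburg_le_sum.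
Qed.
End FiniteOrliczNorms.

Section ArensBidual.
Variables (R : realType) (gT : finGroupType) (Phi : R -> R).
Local Notation F := (gT -> R[i]).
Local Notation D := (F -> R[i]).
Local Notation BD := (D -> R[i]).
Hypothesis AP_full : forall u : F, inAP Phi u.
Variables (K L : R).
Hypothesis normAP_nneg : forall u : F, 0 <= normAP Phi u.
Hypothesis sup_le_normAP : forall (u : F) x, cabs (u x) <= K * normAP Phi u.
Hypothesis normAP_le_l1 : forall u : F, normAP Phi u <= L * \sum_x cabs (u x).

Definition ev (g : gT) : D := fun u => u g.

Definition linear_functional (T : D) : Prop :=
  (forall u v : F, T (fun x => u x + v x) = T u + T v) /\
  (forall (c : R[i]) (u : F), T (fun x => c * u x) = c * T u).

Lemma linear_functional0 (T : D) : linear_functional T -> T (fun _ => 0) = 0.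
Proof.
move=> [_ T_scale]; rewrite -[RHS](mul0r (T (fun _ => 0))) -T_scale.
by congr T; apply: funext => x; rewrite mul0r.
Qed.

Lemma linear_functional_sum (T : D) (I : Type) (r : seq I) (us : I -> F) :
  linear_functional T ->
  T (fun x => \sum_(i <- r) us i x) = \sum_(i <- r) T (us i).
Proof.
move=> linT; elim: r => [|i r IHr].
  rewrite big_nil; transitivity (T (fun _ => 0)); last exact: linear_functional0.
  by congr T; apply: funext => x; rewrite big_nil.
rewrite big_cons -IHr -(proj1 linT); congr T; apply: funext => x; exact: big_cons.
Qed.

Lemma linear_functional_decomp (T : D) (u : F) :
  linear_functional T -> T u = \sum_g u g * T (delta g).
Proof.
move=> linT; transitivity (T (fun x => \sum_g u g * delta g x)).
  congr T; apply: funext => x.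
  rewrite (bigD1 x) //= /delta eqxx mulr1 big1 ?addr0 // => y y_neq_x.
  by rewrite eq_sym (negbTE y_neq_x) mulr0.
by rewrite (linear_functional_sum _ _ linT); apply: eq_bigr => g _; exact: (proj2 linT).
Qed.

Lemma isDual_linear (T : D) : linear_functional T -> isDual Phi T.
Proof.
move=> linT; have [T_add T_scale] := linT.
split=> [u v _ _|c u _||u /(_ (AP_full u)) //]; [exact: T_add | exact: T_scale |].
exists (K * \sum_g cabs (T (delta g))) => u _.
rewrite (linear_functional_decomp _ linT); apply: le_trans (cabs_sum _ _) _.
rewrite mulr_sumr mulr_suml; apply: ler_sum => g _.
by rewrite cabsM mulrAC ler_wpM2r ?cabs_ge0.
Qed.

Lemma linear_isDual (T : D) : isDual Phi T -> linear_functional T.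
Proof. by move=> [T_add T_scale _ _]; split=> *; [apply: T_add | apply: T_scale]. Qed.

Lemma isDual_ev (g : gT) : isDual Phi (ev g).
Proof. by apply: isDual_linear; split. Qed.

Lemma isDual_add (T T' : D) :
  isDual Phi T -> isDual Phi T' -> isDual Phi (fun u => T u + T' u).
Proof.
move=> /linear_isDual[T_add T_scale] /linear_isDual[T'_add T'_scale].
apply: isDual_linear; split=> *.
  by rewrite T_add T'_add addrACA.
by rewrite T_scale T'_scale mulrDr.
Qed.

Lemma isDual_scale (c : R[i]) (T : D) : isDual Phi T -> isDual Phi (fun u => c * T u).
Proof.
move=> /linear_isDual[T_add T_scale].
apply: isDual_linear; split=> *.
  by rewrite T_add mulrDr.
by rewrite T_scale mulrCA.
Qed.

Lemma isDual_zero : isDual Phi (fun _ : F => 0).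
Proof. by apply: isDual_linear; split=> *; rewrite (addr0, mulr0). Qed.

Lemma cabs_le_normDual (T : D) (u : F) :
  isDual Phi T -> normAP Phi u <= 1 -> cabs (T u) <= normDual Phi T.
Proof.
move=> [_ _ [M T_bound] _] u_le1; apply: ub_le_sup; last by exists u.
exists `|M| => _ [v [_ v_le1] <-].
apply: le_trans (T_bound v (AP_full v)) _.
apply: le_trans (ler_wpM2r (normAP_nneg v) (real_ler_norm (num_real M))) _.
by rewrite ler_piMr.
Qed.

Lemma sum_cabs_delta (g : gT) : \sum_x cabs (delta g x : R[i]) = 1.
Proof.
rewrite (bigD1 g) //= /delta eqxx cabs1 big1 ?addr0 // => x /negbTE ->.
exact: cabs0.
Qed.

Lemma cabs_dual_delta_le (T : D) (g : gT) :
  isDual Phi T -> cabs (T (delta g)) <= (L + 1) * normDual Phi T.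
Proof.
move=> dualT; have L_ge0 : 0 <= L.
  by have := le_trans (normAP_nneg _) (normAP_le_l1 (delta g)); rewrite sum_cabs_delta mulr1.
have L1_gt0 : 0 < L + 1 by rewrite ltr_wpDl.
pose t := (L + 1)^-1.
have t_gt0 : 0 < t by rewrite invr_gt0.
have tdelta_le1 : normAP Phi (fun x => t%:C%C * delta g x) <= 1.
  apply: le_trans (normAP_le_l1 _) _.
  under eq_bigr do rewrite cabsM cabs_real ?(ltW t_gt0) //.
  by rewrite -mulr_sumr sum_cabs_delta mulr1 ler_pdivrMr // mul1r lerDl.
have := cabs_le_normDual dualT tdelta_le1.
rewrite (proj2 (linear_isDual dualT)) cabsM cabs_real ?(ltW t_gt0) //.
by rewrite mulrC -ler_pdivlMr // invrK mulrC.
Qed.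

Definition linear_on_dual (X : BD) : Prop :=
  [/\ forall T T' : D, isDual Phi T -> isDual Phi T' ->
        X (fun u => T u + T' u) = X T + X T',
      forall (c : R[i]) (T : D), isDual Phi T -> X (fun u => c * T u) = c * X T &
      forall T : D, ~ isDual Phi T -> X T = 0].

Lemma linear_on_dual_sum (X : BD) (I : Type) (r : seq I) (Ts : I -> D) :
  linear_on_dual X -> (forall i, isDual Phi (Ts i)) ->
  isDual Phi (fun u => \sum_(i <- r) Ts i u) /\
  X (fun u => \sum_(i <- r) Ts i u) = \sum_(i <- r) X (Ts i).
Proof.
move=> [X_add X_scale _] dualTs; elim: r => [|i r [dual_sum IHr]].
  have -> : (fun u => \sum_(i <- [::]) Ts i u) = fun _ => 0.
    by apply: funext => u; rewrite big_nil.
  split; first exact: isDual_zero.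
  rewrite big_nil -[RHS](mul0r (X (fun _ => 0))) -X_scale; last exact: isDual_zero.
  by congr X; apply: funext => u; rewrite mul0r.
have -> : (fun u => \sum_(j <- i :: r) Ts j u) =
          fun u => Ts i u + (fun u => \sum_(j <- r) Ts j u) u.
  by apply: funext => u; rewrite big_cons.
by split; [exact: isDual_add | rewrite X_add // IHr big_cons].
Qed.

Lemma linear_on_dual_decomp (X : BD) (T : D) :
  linear_on_dual X -> isDual Phi T -> X T = \sum_g T (delta g) * X (ev g).
Proof.
move=> linX dualT; have [_ X_scale _] := linX.
have dual_terms g : isDual Phi (fun u => T (delta g) * ev g u).
  exact/isDual_scale/isDual_ev.
transitivity (X (fun u => \sum_g T (delta g) * ev g u)).
  congr X; apply: funext => u.
  rewrite (linear_functional_decomp _ (linear_isDual dualT)).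
  by apply: eq_bigr => g _; rewrite mulrC.
rewrite (proj2 (linear_on_dual_sum _ linX dual_terms)).
by apply: eq_bigr => g _; rewrite X_scale //; exact: isDual_ev.
Qed.

Lemma isBidual_linear (X : BD) : linear_on_dual X -> isBidual Phi X.
Proof.
move=> linX; have [X_add X_scale X_off] := linX; split => //.
exists ((L + 1) * \sum_g cabs (X (ev g))) => T dualT.
rewrite (linear_on_dual_decomp linX dualT); apply: le_trans (cabs_sum _ _) _.
rewrite mulr_sumr mulr_suml; apply: ler_sum => g _.
by rewrite cabsM mulrAC ler_wpM2r ?cabs_ge0 ?cabs_dual_delta_le.
Qed.

Lemma linear_isBidual (X : BD) : isBidual Phi X -> linear_on_dual X.
Proof. by case. Qed.

Lemma dotE (u : F) (T : D) : dot Phi u T = fun v => T (fun x => u x * v x).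
Proof. by apply: funext => v; rewrite /dot (asboolT (AP_full v)). Qed.

Lemma odotE (X : BD) (T : D) : odot Phi X T = fun u => X (dot Phi u T).
Proof. by apply: funext => u; rewrite /odot (asboolT (AP_full u)). Qed.

Lemma arensE (X Y : BD) (T : D) : isDual Phi T -> arens Phi X Y T = X (odot Phi Y T).
Proof. by move=> dualT; rewrite /arens (asboolT dualT). Qed.

Lemma isDual_dot (u : F) (T : D) : isDual Phi T -> isDual Phi (dot Phi u T).
Proof.
move=> /linear_isDual[T_add T_scale]; rewrite dotE; apply: isDual_linear; split.
  by move=> v w; rewrite -T_add; congr T; apply: funext => x; rewrite mulrDr.
by move=> c v; rewrite -T_scale; congr T; apply: funext => x; rewrite mulrCA.
Qed.

Lemma isDual_odot (X : BD) (T : D) :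
  linear_on_dual X -> isDual Phi T -> isDual Phi (odot Phi X T).
Proof.
move=> [X_add X_scale _] dualT; have [T_add T_scale] := linear_isDual dualT.
rewrite odotE; apply: isDual_linear; split.
  move=> u v; rewrite -X_add; try exact: isDual_dot.
  congr X; apply: funext => w.
  by rewrite !dotE -T_add; congr T; apply: funext => x; rewrite mulrDl.
move=> c u; rewrite -X_scale; last exact: isDual_dot.
congr X; apply: funext => w.
by rewrite !dotE -T_scale; congr T; apply: funext => x; rewrite mulrA.
Qed.

Lemma linear_on_dual_arens (X Y : BD) :
  linear_on_dual X -> linear_on_dual Y -> linear_on_dual (arens Phi X Y).
Proof.
move=> linX linY; have [X_add X_scale _] := linX; have [Y_add Y_scale _] := linY.
split=> [T T' dualT dualT'|c T dualT|T not_dualT]; last by rewrite /arens asboolF.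
- rewrite !arensE //; last exact: isDual_add.
  rewrite -X_add; try exact: isDual_odot.
  congr X; apply: funext => u; rewrite !odotE -Y_add; try exact: isDual_dot.
  by congr Y; apply: funext => v; rewrite !dotE.
- rewrite !arensE //; last exact: isDual_scale.
  rewrite -X_scale; last exact: isDual_odot.
  congr X; apply: funext => u; rewrite !odotE -Y_scale; last exact: isDual_dot.
  by congr Y; apply: funext => v; rewrite !dotE.
Qed.

Lemma arens_ev (X Y : BD) (g : gT) :
  linear_on_dual X -> linear_on_dual Y -> arens Phi X Y (ev g) = Y (ev g) * X (ev g).
Proof.
move=> [_ X_scale _] [_ Y_scale _]; have dual_evg := isDual_ev g.
rewrite arensE // -X_scale //; congr X; apply: funext => u.
by rewrite odotE mulrC -Y_scale //; congr Y; apply: funext => v; rewrite dotE.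
Qed.

Definition embed (u : F) : BD := fun T => if `[< isDual Phi T >] then T u else 0.

Lemma linear_on_dual_embed (u : F) : linear_on_dual (embed u).
Proof.
split=> [T T' dualT dualT'|c T dualT|T not_dualT]; rewrite /embed.
- by rewrite !asboolT //; exact: isDual_add.
- by rewrite !asboolT //; exact: isDual_scale.
- by rewrite asboolF.
Qed.

Lemma embed_ev (u : F) (g : gT) : embed u (ev g) = u g.
Proof. by rewrite /embed asboolT //; exact: isDual_ev. Qed.

Lemma isBidual_add (X Y : BD) :
  isBidual Phi X -> isBidual Phi Y -> isBidual Phi (biadd X Y).
Proof.
move=> /linear_isBidual[X_add X_scale X_off] /linear_isBidual[Y_add Y_scale Y_off].
apply: isBidual_linear; split=> [T T' dualT dualT'|c T dualT|T not_dualT]; rewrite /biadd.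
- by rewrite X_add // Y_add // addrACA.
- by rewrite X_scale // Y_scale // mulrDr.
- by rewrite X_off // Y_off // addr0.
Qed.

Lemma isBidual_scale (c : R[i]) (X : BD) : isBidual Phi X -> isBidual Phi (biscale c X).
Proof.
move=> /linear_isBidual[X_add X_scale X_off].
apply: isBidual_linear; split=> [T T' dualT dualT'|d T dualT|T not_dualT]; rewrite /biscale.
- by rewrite X_add // mulrDr.
- by rewrite X_scale // mulrCA.
- by rewrite X_off // mulr0.
Qed.

Lemma isBidual_zero : isBidual Phi (@bizero R gT).
Proof. by apply: isBidual_linear; split=> *; rewrite /bizero ?addr0 ?mulr0. Qed.

Lemma isBidual_arens (X Y : BD) :
  isBidual Phi X -> isBidual Phi Y -> isBidual Phi (arens Phi X Y).
Proof.
move=> /linear_isBidual linX /linear_isBidual linY.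
exact/isBidual_linear/linear_on_dual_arens.
Qed.

Definition ev_kernel (g : gT) (X : BD) : Prop := isBidual Phi X /\ X (ev g) = 0.

Lemma ev_kernel_left_ideal (g : gT) :
  left_ideal (isBidual Phi) (@biadd R gT) (@biscale R gT) (arens Phi) (@bizero R gT)
    (ev_kernel g).
Proof.
split.
- by move=> X [].
- by split; [exact: isBidual_zero | by []].
- move=> X Y [bX X0] [bY Y0]; split; first exact: isBidual_add.
  by rewrite /biadd X0 Y0 addr0.
- move=> c X [bX X0]; split; first exact: isBidual_scale.
  by rewrite /biscale X0 mulr0.
- move=> A X bA [bX X0]; split; first exact: isBidual_arens.
  by rewrite arens_ev ?X0 ?mul0r //; exact: linear_isBidual.
Qed.

Lemma ev_kernel_maximal (g : gT) :
  maximal_modular_left_ideal (isBidual Phi) (@biadd R gT) (@biscale R gT)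
    (arens Phi) (@bizero R gT) (ev_kernel g).
Proof.
pose E := embed (fun _ => 1).
have bE : isBidual Phi E by exact/isBidual_linear/linear_on_dual_embed.
have E1 : E (ev g) = 1 by rewrite /E embed_ev.
split; first exact: ev_kernel_left_ideal.
- exists E; split=> // A bA; split.
    by apply: isBidual_add => //; apply/isBidual_scale/isBidual_arens.
  rewrite /biadd /biscale arens_ev ?E1 ?mul1r ?mulN1r ?subrr //; exact: linear_isBidual.
- by exists E; split=> // -[_]; rewrite E1; apply/eqP; exact: oner_neq0.
- (* ev_kernel g has codimension one: B - k X lies in it for a suitable scalar k. *)
  move=> J idealJ [B [bB not_JB]] sub_J X JX.
  have bX : isBidual Phi X by exact: (li_sub idealJ JX).
  split=> //; apply: contra_notP not_JB => /eqP X0.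
  pose k := B (ev g) / X (ev g).
  have ker_B_kX : ev_kernel g (biadd B (biscale (- k) X)).
    split; first by apply: isBidual_add => //; exact: isBidual_scale.
    by rewrite /biadd /biscale /k mulNr divfK // subrr.
  have -> : B = biadd (biadd B (biscale (- k) X)) (biscale k X).
    by apply: funext => T; rewrite /biadd /biscale mulNr subrK.
  exact: (li_add idealJ (sub_J _ ker_B_kX) (li_scale idealJ k JX)).
Qed.

Theorem bidual_arens_semisimple_of_normAP_equiv : bidual_arens_semisimple gT Phi.
Proof.
move=> X [bX X_rad]; apply: funext => T; rewrite /bizero.
have [dualT|not_dualT] := asboolP (isDual Phi T); last by case: bX => _ _ _ ->.
rewrite (linear_on_dual_decomp (linear_isBidual bX) dualT) big1 // => g _.
by have [_ ->] := X_rad _ (ev_kernel_maximal g); rewrite mulr0.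
Qed.
End ArensBidual.

Theorem proposition3p5 (R : realType) (gT : finGroupType) (Phi Psi : R -> R) :
  young_function Phi -> young_function Psi -> complementary Phi Psi ->
  delta2 Phi -> delta2 Psi ->
  bidual_arens_semisimple gT Phi.
Proof.
move=> yPhi _ _ _ _.
have [a a_gt0 Phi_a_le1] := young_exists_le1 yPhi.
have [b b_gt0 Phi_gt1] := young_exists_gt1 yPhi.
exact: (bidual_arens_semisimple_of_normAP_equiv (inAP_all yPhi a_gt0 Phi_a_le1)
  (normAP_ge0 yPhi a_gt0 Phi_a_le1 b_gt0 Phi_gt1)
  (cabs_le_normAP yPhi a_gt0 Phi_a_le1 b_gt0 Phi_gt1)
  (normAP_le_sum yPhi a_gt0 Phi_a_le1 b_gt0 Phi_gt1)).
Qed.
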